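(* Let $A,B\subset\mathbb{R}^n$ be set-germs at $0$ with $0\in\overline{A}\cap\overline{B}$, and let $h:(\mathbb{R}^n,0)\to(\mathbb{R}^n,0)$ be a bi-Lipschitz homeomorphism (germ). Suppose that $B$ satisfies condition $(SSP)$. If $D(A)\subset D(B)$, then $D(h(A))\subset D(h(B))$.
   Context: A bi-Lipschitz homeomorphism germ is a homeomorphism between neighbourhoods of $0$ fixing $0$ with $K_1|x-y|\le|h(x)-h(y)|\le K_2|x-y|$ for some $0<K_1\le K_2$ near $0$. Direction set: $D(A)=\{a\in S^{n-1} : \exists\, \{x_i\}\subset A\setminus\{0\},\ x_i\to 0,\ x_i/\|x_i\|\to a\}$. A set-germ $B$ with $0\in\overline{B}$ satisfies condition $(SSP)$ if for every sequence $\{a_m\}\subset\mathbb{R}^n$ with $a_m\to0$ and $\lim a_m/\|a_m\|\in D(B)$ there is a sequence $\{b_m\}\subset B$ with $\|a_m-b_m\|/\|a_m\|\to0$ and $\|a_m-b_m\|/\|b_m\|\to0$. *)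

From mathcomp Require Import all_boot all_order all_algebra.
From mathcomp Require Import reals.
From mathcomp Require Import classical_sets.
Set Implicit Arguments. Unset Strict Implicit. Unset Printing Implicit Defensive.
Import Order.TTheory GRing.Theory Num.Theory.
Local Open Scope ring_scope.
Local Open Scope classical_set_scope.

Section Defs.
Variables (R : realType) (n : nat).
Local Notation V := 'rV[R]_n.

Definition enorm (x : V) : R := Num.sqrt (\sum_(i < n) (x ord0 i) ^+ 2).

Definition vcvg (u : nat -> V) (l : V) : Prop :=
  forall e : R, 0 < e -> exists N : nat, forall m, (N <= m)%N -> enorm (u m - l) < e.

Definition in_closure0 (A : set V) : Prop :=
  forall e : R, 0 < e -> exists x, A x /\ enorm x < e.

Definition dirset (A : set V) : set V :=
  [set a | enorm a = 1 /\
     exists x : nat -> V, (forall i, A (x i) /\ x i != 0) /\ vcvg x 0 /\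
       vcvg (fun i => (enorm (x i))^-1 *: x i) a].

(* condition (SSP); the ratio conditions ||a_m-b_m||/||a_m|| -> 0 and
   ||a_m-b_m||/||b_m|| -> 0 are written as: for every e > 0, eventually
   ||a_m-b_m|| <= e ||a_m|| and ||a_m-b_m|| <= e ||b_m||. *)
Definition SSP (B : set V) : Prop :=
  forall (a : nat -> V) (d : V),
    (forall m, a m != 0) -> vcvg a 0 ->
    vcvg (fun m => (enorm (a m))^-1 *: a m) d -> dirset B d ->
    exists b : nat -> V, (forall m, B (b m)) /\
      forall e : R, 0 < e -> exists N : nat, forall m, (N <= m)%N ->
        enorm (a m - b m) <= e * enorm (a m) /\
        enorm (a m - b m) <= e * enorm (b m).

Definition open_set (U : set V) : Prop :=
  forall x, U x -> exists r : R, 0 < r /\ forall y, enorm (y - x) < r -> U y.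

Definition homeo_on (U : set V) (h : V -> V) : Prop :=
  open_set U /\ open_set (h @` U) /\
  {in U &, injective h} /\
  (forall x, U x -> forall e : R, 0 < e -> exists d : R, 0 < d /\
     forall y, U y -> enorm (y - x) < d -> enorm (h y - h x) < e) /\
  (forall x, U x -> forall e : R, 0 < e -> exists d : R, 0 < d /\
     forall y, U y -> enorm (h y - h x) < d -> enorm (y - x) < e).

Definition biLipschitz_germ (U : set V) (h : V -> V) : Prop :=
  U 0 /\ homeo_on U h /\ h 0 = 0 /\
  exists r K1 K2 : R, 0 < r /\ 0 < K1 /\ K1 <= K2 /\
    forall x y, enorm x < r -> enorm y < r -> U x -> U y ->
      K1 * enorm (x - y) <= enorm (h x - h y) /\
      enorm (h x - h y) <= K2 * enorm (x - y).

End Defs.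

(* Pull a sequence realising d in D(h(A)) back by h^-1 and pass to a subsequence
   whose directions converge, necessarily to some a in D(A), hence in D(B). (SSP)
   then gives points b_m of B with |x_m - b_m| = o(|x_m|). The bi-Lipschitz bounds
   turn this into |h x_m - h b_m| = o(|h x_m|), and two sequences that are close
   in this sense have the same limiting direction, so d lies in D(h(B)). *)

From mathcomp Require Import all_boot all_order all_algebra.
From mathcomp Require Import reals classical_sets boolp topology normedtype sequences.
From mathcomp Require Import ring lra.
Import Order.TTheory GRing.Theory Num.Theory.
Import numFieldNormedType.Exports.
Set Implicit Arguments. Unset Strict Implicit. Unset Printing Implicit Defensive.
Local Open Scope ring_scope.
Local Open Scope classical_set_scope.

Section EuclideanNorm.
Variables (R : realType) (n : nat).
Implicit Types (x y : 'rV[R]_n) (c d : R).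

Definition sqnorm x : R := \sum_(i < n) x ord0 i ^+ 2.
Definition dotv x y : R := \sum_(i < n) x ord0 i * y ord0 i.

Lemma sqnorm_ge0 x : 0 <= sqnorm x.
Proof. by apply: sumr_ge0 => i _; rewrite sqr_ge0. Qed.

Lemma enorm_ge0 x : 0 <= enorm x.
Proof. exact: sqrtr_ge0. Qed.

Lemma sqr_enorm x : enorm x ^+ 2 = sqnorm x.
Proof. by rewrite sqr_sqrtr // sqnorm_ge0. Qed.

Lemma enorm_eq0 x : (enorm x == 0) = (x == 0).
Proof.
rewrite /enorm sqrtr_eq0 -/(sqnorm x) le_eqVlt ltNge sqnorm_ge0 orbF.
rewrite psumr_eq0 => [|i _]; last exact: sqr_ge0.
apply/idP/eqP => [/allP x0|->]; last by apply/allP => i _; rewrite mxE expr2 mulr0 eqxx.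
apply/matrixP => i j; rewrite (ord1 i) mxE.
by have := x0 j (mem_index_enum j); rewrite sqrf_eq0 => /eqP.
Qed.

Lemma enorm0 : enorm (0 : 'rV[R]_n) = 0.
Proof. by apply/eqP; rewrite enorm_eq0. Qed.

Lemma enorm_gt0 x : (0 < enorm x) = (x != 0).
Proof. by rewrite lt_def enorm_eq0 enorm_ge0 andbT. Qed.

Lemma enormZ c x : enorm (c *: x) = `|c| * enorm x.
Proof.
rewrite /enorm -sqrtr_sqr -sqrtrM ?sqr_ge0 // mulr_sumr.
by congr Num.sqrt; apply: eq_bigr => i _; rewrite mxE exprMn.
Qed.

Lemma enormN x : enorm (- x) = enorm x.
Proof. by rewrite -scaleN1r enormZ normrN normr1 mul1r. Qed.

Lemma sqnormD x y : sqnorm (x + y) = sqnorm x + sqnorm y + 2 * dotv x y.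
Proof.
rewrite /sqnorm /dotv mulr_sumr -!big_split /=.
by apply: eq_bigr => i _; rewrite mxE; ring.
Qed.

(* Cauchy-Schwarz, from [0 <= sqnorm (|y| x - |x| y)]. *)
Lemma dotv_le_enorm x y : dotv x y <= enorm x * enorm y.
Proof.
set a := enorm x; set b := enorm y.
have expand : sqnorm (b *: x - a *: y) =
    b ^+ 2 * sqnorm x + a ^+ 2 * sqnorm y - 2 * (a * b) * dotv x y.
  rewrite /sqnorm /dotv !mulr_sumr -big_split -sumrB /=.
  by apply: eq_bigr => i _; rewrite !mxE; ring.
have key : 0 <= 2 * (a * b) * (a * b - dotv x y).
  rewrite (_ : _ * (_ - _) = sqnorm (b *: x - a *: y)) ?sqnorm_ge0 //.
  by rewrite expand -!sqr_enorm -/a -/b; ring.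
have [ab0|ab_neq0] := eqVneq (a * b) 0.
  rewrite ab0; move: ab0 => /eqP; rewrite mulf_eq0 !enorm_eq0 => /orP[] /eqP ->;
  by rewrite /dotv big1 // => i _; rewrite mxE ?mul0r ?mulr0.
have ab_gt0 : 0 < a * b by rewrite lt_def ab_neq0 mulr_ge0 ?enorm_ge0.
by rewrite -subr_ge0 -(pmulr_rge0 _ (_ : 0 < 2 * (a * b))) // mulr_gt0.
Qed.

Lemma enormD x y : enorm (x + y) <= enorm x + enorm y.
Proof.
rewrite -ler_sqr ?nnegrE ?addr_ge0 ?enorm_ge0 // sqr_enorm sqnormD sqrrD -!sqr_enorm.
have := dotv_le_enorm x y; lra.
Qed.

Lemma enormB x y : enorm (x - y) <= enorm x + enorm y.
Proof. by rewrite -(enormN y) enormD. Qed.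

Lemma ler_dist_enorm x y : `|enorm x - enorm y| <= enorm (x - y).
Proof.
have := enormD (x - y) y; have := enormD (y - x) x.
rewrite !subrK -opprB enormN ler_norml; lra.
Qed.

Lemma ler_coord_enorm x i : `|x ord0 i| <= enorm x.
Proof.
rewrite -sqrtr_sqr ler_sqrt ?sqnorm_ge0 // (bigD1 i) //= lerDl.
by apply: sumr_ge0 => j _; rewrite sqr_ge0.
Qed.

Lemma enorm_le_coord x d : 0 <= d -> (forall i, `|x ord0 i| <= d) ->
  enorm x <= n%:R * d.
Proof.
move=> d_ge0 xd.
rewrite -ler_sqr ?nnegrE ?enorm_ge0 ?mulr_ge0 // sqr_enorm.
apply: (@le_trans _ _ (\sum_(i < n) d ^+ 2)).
  by apply: ler_sum => i _; rewrite -real_normK ?num_real // lerXn2r ?nnegrE.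
rewrite sumr_const card_ord -[_ *+ n]mulr_natl exprMn.
apply: ler_wpM2r; first exact: sqr_ge0.
by rewrite -natrX ler_nat -mulnn; case: (n) => // m; apply: leq_pmulr.
Qed.

Definition dirv x : 'rV[R]_n := (enorm x)^-1 *: x.

Lemma scale_enorm_dirv x : enorm x *: dirv x = x.
Proof.
have [->|x0] := eqVneq x 0; first by rewrite /dirv !scaler0.
by rewrite scalerA mulfV ?scale1r // enorm_eq0.
Qed.

Lemma enorm_dirv x : x != 0 -> enorm (dirv x) = 1.
Proof.
by move=> x0; rewrite enormZ normfV ger0_norm ?enorm_ge0 // mulVf // enorm_eq0.
Qed.

Lemma enorm_dirv_le1 x : enorm (dirv x) <= 1.
Proof. by have [->|/enorm_dirv ->] := eqVneq x 0; rewrite /dirv ?scaler0 ?enorm0. Qed.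

Lemma dirv_dist_le x y : x != 0 ->
  enorm (dirv y - dirv x) <= 2 * enorm (y - x) / enorm x.
Proof.
move=> x0; have x_gt0 : 0 < enorm x by rewrite enorm_gt0.
have split_diff :
    enorm x *: (dirv y - dirv x) = (y - x) + (enorm x - enorm y) *: dirv y.
  by rewrite scalerBr scale_enorm_dirv scalerBl scale_enorm_dirv [RHS]addrC addrA subrK.
have second_le : `|enorm x - enorm y| * enorm (dirv y) <= enorm (y - x).
  rewrite -[enorm (y - x)]mulr1 ler_pM ?normr_ge0 ?enorm_ge0 ?enorm_dirv_le1 //.
  by rewrite -[y - x]opprB enormN ler_dist_enorm.
rewrite ler_pdivlMr // mulrC -[enorm x]ger0_norm ?enorm_ge0 // -enormZ split_diff.
by apply: le_trans (enormD _ _) _; rewrite enormZ; lra.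
Qed.

End EuclideanNorm.

Lemma cvg_increasing_seq (phi : nat -> nat) : increasing_seq phi -> phi @ \oo --> \oo.
Proof.
move=> phi_incr; have le_phi m : (m <= phi m)%N.
  elim: m => // m ih; apply: leq_ltn_trans ih _.
  by have := phi_incr m.+1 m; rewrite leEnat ltnn ltnNge => ->.
by move=> P [N _ NP]; exists N => // m /= Nm; apply: NP; apply: leq_trans Nm (le_phi m).
Qed.

Section SequenceConvergence.
Variables (R : realType) (n : nat).
Implicit Types (u : nat -> 'rV[R]_n) (l : 'rV[R]_n).

Lemma vcvgP u l :
  vcvg u l <-> forall e, 0 < e -> \forall m \near \oo, enorm (u m - l) < e.
Proof. by split=> ul e /ul [N]; [exists N | move=> _ uN; exists N => m /uN]. Qed.

Lemma vcvg0_near u s : vcvg u 0 -> 0 < s -> \forall m \near \oo, enorm (u m) < s.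
Proof. by move=> /vcvgP u0 /u0; apply: filterS => m; rewrite subr0. Qed.

Lemma vcvg_comp u l (phi : nat -> nat) :
  phi @ \oo --> \oo -> vcvg u l -> vcvg (u \o phi) l.
Proof. by move=> phi_oo /vcvgP ul; apply/vcvgP => e /ul /phi_oo. Qed.

Lemma vcvg_enorm u l : vcvg u l -> (fun m => enorm (u m)) @ \oo --> enorm l.
Proof.
move=> /vcvgP ul; apply/cvgrPdist_lt => e /ul; apply: filterS => m.
by rewrite distrC; apply: le_lt_trans (ler_dist_enorm _ _).
Qed.

Lemma vcvg_coord u l :
  (forall i, (fun m => u m ord0 i) @ \oo --> l ord0 i) -> vcvg u l.
Proof.
move=> ul; apply/vcvgP => e e_gt0.
have e'_gt0 : 0 < e / n.+1%:R by rewrite divr_gt0.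
have coord_near : \forall m \near \oo, forall i, `|(u m - l) ord0 i| < e / n.+1%:R.
  apply: filter_forall => i; have /cvgrPdist_lt/(_ _ e'_gt0) := ul i.
  by apply: filterS => m; rewrite !mxE distrC.
apply: filterS coord_near => m um.
apply: le_lt_trans (enorm_le_coord (ltW e'_gt0) (fun i => ltW (um i))) _.
by rewrite mulrA ltr_pdivrMr ?ltr0Sn // [X in _ < X]mulrC ltr_pM2r // ltr_nat.
Qed.

Lemma bounded_vseq_cvg_subseq u M : (forall m, enorm (u m) <= M) ->
  exists2 phi, increasing_seq phi & exists l, vcvg (u \o phi) l.
Proof.
move=> uM.
have coord_bounded i (phi : nat -> nat) : bounded_fun (fun m => u (phi m) ord0 i).
  exists M; split; first exact: num_real.
  by move=> N MN m _; apply: le_trans (ler_coord_enorm _ _) (le_trans (uM _) (ltW MN)).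
have coords_cvg k : exists2 phi, increasing_seq phi & forall i : 'I_n, (i < k)%N ->
    exists c : R, (fun m => u (phi m) ord0 i) @ \oo --> c.
  elim: k => [|k [phi phi_incr ih]]; first by exists id.
  have [k_lt|k_ge] := ltnP k n; last first.
    by exists phi => // i ik; apply: ih; apply: leq_trans (ltn_ord i) k_ge.
  have [psi psi_incr cvg_k] := bolzano_weierstrass (coord_bounded (Ordinal k_lt) phi).
  exists (phi \o psi) => [a b /=|i]; first by rewrite phi_incr -leEnat psi_incr.
  rewrite ltnS leq_eqVlt => /orP[/eqP ik|/ih [c cvg_i]].
    by rewrite (_ : i = Ordinal k_lt); [apply/cvg_ex | apply: val_inj].
  by exists c; apply: cvg_comp (cvg_increasing_seq psi_incr) cvg_i.
have [phi phi_incr /(_ _ (ltn_ord _)) cvg_coords] := coords_cvg n.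
have [c cP] := choice cvg_coords.
by exists phi => //; exists (\row_i c i); apply: vcvg_coord => i; rewrite mxE.
Qed.

End SequenceConvergence.

Section AsymptoticEquivalence.
Variables (R : realType) (n : nat).
Implicit Types (x y : nat -> 'rV[R]_n).

Definition asym_equiv x y :=
  forall e, 0 < e -> \forall m \near \oo, enorm (x m - y m) <= e * enorm (x m).

Lemma asym_equiv_cvg0 x y : asym_equiv x y -> vcvg x 0 -> vcvg y 0.
Proof.
move=> xy x0; apply/vcvgP => e e_gt0; near=> m; rewrite subr0.
have xym : enorm (x m - y m) <= 1 * enorm (x m) by near: m; exact: xy.
have xm : enorm (x m) < e / 2 by near: m; apply: vcvg0_near; rewrite ?divr_gt0.
rewrite -[y m](subKr (x m)); apply: le_lt_trans (enormB _ _) _; lra.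
Unshelve. all: by end_near.
Qed.

Lemma asym_equiv_neq0 x y : asym_equiv x y -> (forall m, x m != 0) ->
  \forall m \near \oo, y m != 0.
Proof.
move=> xy x0; apply: filterS (xy (1 / 2) _) => [m|]; last by rewrite divr_gt0.
have x_gt0 : 0 < enorm (x m) by rewrite enorm_gt0.
by apply: contraTneq => ->; rewrite subr0; lra.
Qed.

Lemma asym_equiv_dirv x y d : asym_equiv x y -> (forall m, x m != 0) ->
  vcvg (fun m => dirv (x m)) d -> vcvg (fun m => dirv (y m)) d.
Proof.
move=> xy x0 /vcvgP xd; apply/vcvgP => e e_gt0; near=> m.
have xym : enorm (x m - y m) <= e / 4 * enorm (x m).
  by near: m; apply: xy; rewrite divr_gt0.
have xdm : enorm (dirv (x m) - d) < e / 2 by near: m; apply: xd; rewrite divr_gt0.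
have yx : enorm (dirv (y m) - dirv (x m)) <= e / 2.
  apply: le_trans (dirv_dist_le _ (x0 m)) _.
  rewrite -[y m - x m]opprB enormN ler_pdivrMr ?enorm_gt0 //; lra.
rewrite -(subrK (dirv (x m)) (dirv (y m))) -addrA.
apply: le_lt_trans (enormD _ _) _; lra.
Unshelve. all: by end_near.
Qed.

End AsymptoticEquivalence.

Section BiLipschitz.
Variables (R : realType) (n : nat).
Implicit Types (S : set 'rV[R]_n) (h : 'rV[R]_n -> 'rV[R]_n).

Definition bilipschitz_on S h (K1 K2 : R) := forall x y, S x -> S y ->
  K1 * enorm (x - y) <= enorm (h x - h y) /\ enorm (h x - h y) <= K2 * enorm (x - y).

Lemma bilipschitz_asym_equiv S h K1 K2 (x y : nat -> 'rV[R]_n) :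
  0 < K1 -> 0 < K2 -> bilipschitz_on S h K1 K2 -> S 0 -> h 0 = 0 ->
  (\forall m \near \oo, S (x m) /\ S (y m)) ->
  asym_equiv x y -> asym_equiv (h \o x) (h \o y).
Proof.
move=> K1_gt0 K2_gt0 hS S0 h0 xyS xy e e_gt0; near=> m => /=.
have [xS yS] : S (x m) /\ S (y m) by near: m.
have xym : enorm (x m - y m) <= e * K1 / K2 * enorm (x m).
  by near: m; apply: xy; rewrite !mulr_gt0 ?invr_gt0.
have [_ hxy] := hS _ _ xS yS.
have [hx _] := hS _ _ xS S0; rewrite h0 !subr0 in hx.
apply: le_trans hxy (le_trans (ler_wpM2l (ltW K2_gt0) xym) _).
have -> : K2 * (e * K1 / K2 * enorm (x m)) = e * (K1 * enorm (x m)).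
  by field; rewrite gt_eqF.
by rewrite ler_pM2l.
Unshelve. all: by end_near.
Qed.

End BiLipschitz.

Section Directions.
Variables (R : realType) (n : nat).
Implicit Types (A E U : set 'rV[R]_n) (h : 'rV[R]_n -> 'rV[R]_n).

Lemma dirv_cvg_subseq (x : nat -> 'rV[R]_n) : (forall m, x m != 0) ->
  exists2 phi, increasing_seq phi &
    exists2 a, enorm a = 1 & vcvg (fun m => dirv (x (phi m))) a.
Proof.
move=> x0; have [phi phi_incr [a xa]] :=
  bounded_vseq_cvg_subseq (fun m => enorm_dirv_le1 (x m)).
exists phi => //; exists a => //; apply: (cvg_unique _ (vcvg_enorm xa)) => //=.
have -> : (fun m => enorm (dirv (x (phi m)))) = fun=> 1.
  by apply/funext => m; rewrite enorm_dirv.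
exact: cvg_cst.
Qed.

Lemma dirset_tail A (y : nat -> 'rV[R]_n) d : enorm d = 1 ->
  (\forall m \near \oo, A (y m) /\ y m != 0) ->
  vcvg y 0 -> vcvg (fun m => dirv (y m)) d -> dirset A d.
Proof.
move=> d1 [N _ yN] y0 yd; split => //; exists (fun m => y (N + m)); split.
  by move=> m; apply: yN; rewrite /= leq_addr.
have shift : addn N @ \oo --> \oo.
  by apply: cvg_increasing_seq => a b; rewrite leEnat leq_add2l.
by split; [exact: vcvg_comp shift y0 | exact: vcvg_comp shift yd].
Qed.

Lemma dirset_image_seq E h d : dirset (h @` E) d ->
  exists x : nat -> 'rV[R]_n, (forall m, E (x m) /\ h (x m) != 0) /\
    vcvg (fun m => h (x m)) 0 /\ vcvg (fun m => dirv (h (x m))) d.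
Proof.
move=> [_ [y [yE [y0 yd]]]].
have /choice [x xy] : forall m, exists v, E v /\ h v = y m.
  by move=> m; have [[v Ev <-] _] := yE m; exists v.
have hx : (fun m => h (x m)) = y by apply/funext => m; rewrite (xy m).2.
exists x; split; last by rewrite hx; rewrite -hx in yd.
by move=> m; rewrite (xy m).2; split; [exact: (xy m).1 | exact: (yE m).2].
Qed.

Lemma homeo_on_vcvg_inv U h p (x : nat -> 'rV[R]_n) : homeo_on U h -> U p ->
  (forall m, U (x m)) -> vcvg (fun m => h (x m)) (h p) -> vcvg x p.
Proof.
move=> [_ [_ [_ [_ hinv]]]] Up xU hx e /(hinv p Up) [d [d_gt0 hd]].
by have [N hN] := hx d d_gt0; exists N => m /hN; apply: hd.
Qed.

Lemma dirset_image_subseq A U h d : U 0 -> h 0 = 0 -> homeo_on U h ->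
  dirset (h @` (A `&` U)) d ->
  exists x : nat -> 'rV[R]_n, exists2 a, dirset A a &
    [/\ forall m, x m != 0 /\ h (x m) != 0, vcvg x 0, vcvg (fun m => h (x m)) 0,
        vcvg (fun m => dirv (x m)) a & vcvg (fun m => dirv (h (x m))) d].
Proof.
move=> U0 h0 homeo /dirset_image_seq [x [xAU [hx0 hxd]]].
have xn0 m : x m != 0 by apply: contraNneq (xAU m).2 => ->; rewrite h0.
have x0 : vcvg x 0.
  by apply: homeo_on_vcvg_inv homeo U0 (fun m => (xAU m).1.2) _; rewrite h0.
have [phi /cvg_increasing_seq phi_oo [a a1 xa]] := dirv_cvg_subseq xn0.
exists (x \o phi), a; last first.
  split => //; [by move=> m; split; [exact: xn0 | exact: (xAU _).2] |
                exact: vcvg_comp phi_oo x0 | exact: vcvg_comp phi_oo hx0 |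
                exact: vcvg_comp phi_oo hxd].
apply: (dirset_tail (y := x \o phi)) a1 _ (vcvg_comp phi_oo x0) xa.
by apply: nearW => m; split; [exact: (xAU _).1.1 | exact: xn0].
Qed.

Lemma biLipschitz_germ_ball U h : biLipschitz_germ U h ->
  exists s K1 K2, [/\ 0 < s, 0 < K1, 0 < K2, forall v, enorm v < s -> U v &
    bilipschitz_on [set v | enorm v < s] h K1 K2].
Proof.
move=> [U0 [[Uo _] [_ [r [K1 [K2 [r_gt0 [K1_gt0 [K12 hK]]]]]]]]].
have [r1 [r1_gt0 Ur1]] := Uo 0 U0.
have sU v : enorm v < r1 -> U v by move=> vr1; apply: Ur1; rewrite subr0.
exists (Num.min r r1), K1, K2; split => //.
- by rewrite lt_min r_gt0.
- exact: lt_le_trans K12.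
- by move=> v; rewrite lt_min => /andP[_ /sU].
- move=> v w; rewrite /= !lt_min => /andP[vr /sU Uv] /andP[wr /sU Uw].
  exact: hK.
Qed.

End Directions.

(* h(A) is the image of the germ A, i.e. of A ∩ U, where U is the domain of h. *)
Theorem proposition5p8 (R : realType) (n : nat) (A B U : set 'rV[R]_n)
    (h : 'rV[R]_n -> 'rV[R]_n) :
  in_closure0 A -> in_closure0 B ->
  biLipschitz_germ U h ->
  SSP B ->
  dirset A `<=` dirset B ->
  dirset (h @` (A `&` U)) `<=` dirset (h @` (B `&` U)).
Proof.
move=> _ _ germ ssp AB d hd; have [U0 [homeo [h0 _]]] := germ.
have [s [K1 [K2 [s_gt0 K1_gt0 K2_gt0 sU hS]]]] := biLipschitz_germ_ball germ.
have [x [a /AB aB [xn0 x0 hx0 xa hxd]]] := dirset_image_subseq U0 h0 homeo hd.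
have [b [bB xb_close]] := ssp x a (fun m => (xn0 m).1) x0 xa aB.
have xb : asym_equiv x b by move=> e /xb_close [N bN]; exists N => // m /bN [].
have x_small : \forall m \near \oo, enorm (x m) < s := vcvg0_near x0 s_gt0.
have b_small : \forall m \near \oo, enorm (b m) < s :=
  vcvg0_near (asym_equiv_cvg0 xb x0) s_gt0.
have hxb : asym_equiv (h \o x) (h \o b).
  apply: bilipschitz_asym_equiv K1_gt0 K2_gt0 hS _ h0 _ xb; first by rewrite /= enorm0.
  by near=> m; split; near: m.
have hb_neq0 := asym_equiv_neq0 hxb (fun m => (xn0 m).2).
have [d1 _] := hd.
apply: (dirset_tail (y := h \o b)) d1 _ (asym_equiv_cvg0 hxb hx0) _.
  near=> m; split; last by near: m.
  by exists (b m) => //; split => //; apply: sU; near: m.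
exact: asym_equiv_dirv hxb (fun m => (xn0 m).2) hxd.
Unshelve. all: by end_near.
Qed.
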